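(* Let $X_1,X_0$ be real random variables with densities $f_1,f_0$, and let $p_1,p_0>0$. For $b>0$ and $s\in\mathbb{R}$ define \[ \mathcal{O}_b(s)=p_1\log\mathbb{E}\Big[\Big(\tfrac{e^{sX_1}}{e^{sX_1}+e^{-sX_1}}\Big)^{b}\Big]+p_0\log\mathbb{E}\Big[\Big(\tfrac{e^{-sX_0}}{e^{sX_0}+e^{-sX_0}}\Big)^{b}\Big]. \] Assume $f_1(x)\ge f_1(-x)$ and $f_0(x)\le f_0(-x)$ for all $x\ge 0$. Then for every $b\ge 1$ the function $s\mapsto\mathcal{O}_b(s)$ is nondecreasing on $[0,\infty)$; in particular $\sup_{s\ge0}\mathcal{O}_b(s)=\lim_{s\to\infty}\mathcal{O}_b(s)$, i.e.\ the weighted estimator $\hat s_w(b)=\operatorname{argmax}\mathcal{O}_b$ equals $\infty$.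
   Context: $\mathcal{O}_b$ is the large-sample limit of the DRFit objective (entropy-weighted loss with $\rho_k=1$, no ridge term, $b=1/\alpha$) for one-dimensional logistic regression $\mathbb{P}(y=1\mid x)=e^{sx}/(e^{sx}+e^{-sx})$ on labelled data, where $X_k$ is the covariate distribution given (possibly erroneous) label $k$ and $p_k$ the probability of label $k$. *)

From HB Require Import structures.
From mathcomp Require Import all_boot all_order all_algebra.
From mathcomp Require Import all_classical all_reals all_analysis.
Set Implicit Arguments. Unset Strict Implicit. Unset Printing Implicit Defensive.
Import Order.TTheory GRing.Theory Num.Theory.
Import numFieldNormedType.Exports.
Local Open Scope classical_set_scope.
Local Open Scope ring_scope.

Definition is_density {R : realType} (f : R -> R) : Prop :=
  measurable_fun setT f /\ (forall x, 0 <= f x) /\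
  (\int[lebesgue_measure]_x (f x)%:E = 1)%E.

Definition expect_dens {R : realType} (f : R -> R) (g : R -> R) : R :=
  Rintegral lebesgue_measure setT (fun x => g x * f x).

Definition pos_prob {R : realType} (s x : R) : R :=
  expR (s * x) / (expR (s * x) + expR (- (s * x))).
Definition neg_prob {R : realType} (s x : R) : R :=
  expR (- (s * x)) / (expR (s * x) + expR (- (s * x))).

Definition Obj {R : realType} (f1 f0 : R -> R) (p1 p0 b s : R) : R :=
  p1 * ln (expect_dens f1 (fun x => pos_prob s x `^ b))
  + p0 * ln (expect_dens f0 (fun x => neg_prob s x `^ b)).

From HB Require Import structures.
From mathcomp Require Import all_boot all_order all_algebra.
From mathcomp Require Import all_classical all_reals all_analysis.
From mathcomp Require Import measurable_realfun.
From mathcomp.algebra_tactics Require Import ring lra.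
Import Order.TTheory GRing.Theory Num.Theory.
Import numFieldNormedType.Exports.
Local Open Scope classical_set_scope.
Local Open Scope ring_scope.

(* Reflecting x to -x gives E[h(X)] = 1/2 int (h(x) f(x) + h(-x) f(-x)) dx, so it is
   enough to show that, for x >= 0, this symmetrized integrand is nondecreasing in s.
   With p = sigma(s x) >= 1/2 and A = f1(x) >= B = f1(-x), the integrand is
   p^b (A - B) + (p^b + (1 - p)^b) B, and both p^b and, by convexity of t |-> t^b for
   b >= 1, p^b + (1 - p)^b grow with p on [1/2, 1]; the X0 term is the mirror image.
   Hence O_b is nondecreasing on [0, oo[, and being bounded by 0 it converges to its
   supremum. *)

Section nondecreasing_halfline.
Context {R : realType}.

Lemma nondecreasing_itv_cvgr (f : R -> R) (a : R) :
  {in `[a, +oo[ &, {homo f : x y / x <= y}} ->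
  has_ubound (f @` `[a, +oo[) ->
  f r @[r --> +oo] --> sup (f @` `[a, +oo[).
Proof.
move=> ndf ubf; pose g r := f (Num.max a r).
have ina r : Num.max a r \in `[a, +oo[ by rewrite in_itv /= le_max lexx.
have rangeg : range g = f @` `[a, +oo[.
  apply/seteqP; split => _ [r ar <-].
    by exists (Num.max a r) => //; have := ina r; rewrite inE.
  by exists r => //; rewrite /g max_r //; move: ar; rewrite /= in_itv /= andbT.
have ndg : nondecreasing_fun g.
  by move=> x y xy; apply: ndf; rewrite ?ina // le_max2.
rewrite -rangeg; apply: cvg_trans (nondecreasing_cvgr ndg _); last by rewrite rangeg.
apply: near_eq_cvg; near=> r.
have ar : a <= r by near: r; apply: nbhs_pinfty_ge; exact: num_real.
by rewrite /g max_r.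
Unshelve. all: by end_near. Qed.

End nondecreasing_halfline.

Section logistic.
Context {R : realType}.

Definition logistic (u : R) : R := expR u / (expR u + expR (- u)).

Lemma logistic_den_gt0 (u : R) : 0 < expR u + expR (- u).
Proof. by rewrite addr_gt0 ?expR_gt0. Qed.

Lemma logistic_gt0 (u : R) : 0 < logistic u.
Proof. by rewrite divr_gt0 ?expR_gt0 ?logistic_den_gt0. Qed.

Lemma logistic_le1 (u : R) : logistic u <= 1.
Proof. by rewrite ler_pdivrMr ?logistic_den_gt0 // mul1r lerDl expR_ge0. Qed.

Lemma logisticN (u : R) : logistic (- u) = 1 - logistic u.
Proof.
have den_neq0 : expR u + expR (- u) != 0 by rewrite gt_eqF ?logistic_den_gt0.
by rewrite /logistic opprK addrC; field.
Qed.

Lemma logistic0 : logistic 0 = 2^-1.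
Proof. by rewrite /logistic oppr0 expR0 div1r. Qed.

Lemma logisticE (u : R) : logistic u = (1 + expR (- (u + u)))^-1.
Proof.
have eu_neq0 : expR u != 0 by rewrite gt_eqF ?expR_gt0.
rewrite /logistic !expRN expRD; field.
by rewrite eu_neq0 gt_eqF // ltr_pwDr ?mulr_ge0 ?expR_ge0.
Qed.

Lemma ler_logistic : {homo logistic : u v / u <= v}.
Proof.
move=> u v uv; rewrite !logisticE lef_pV2 ?posrE ?addr_gt0 ?expR_gt0 //.
by rewrite lerD2l ler_expR lerN2 lerD.
Qed.

Lemma logistic_ge_half (u : R) : 0 <= u -> 2^-1 <= logistic u.
Proof. by move=> u_ge0; rewrite -logistic0 ler_logistic. Qed.

Lemma continuous_logistic : continuous logistic.
Proof.
move=> u; apply: continuousM; first exact: continuous_expR.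
apply: continuousV; first by rewrite gt_eqF // logistic_den_gt0.
apply: continuousD; first exact: continuous_expR.
by apply: continuous_comp; [exact: opp_continuous | exact: continuous_expR].
Qed.

Lemma neg_probE (s x : R) : neg_prob s x = logistic (- (s * x)).
Proof. by rewrite /neg_prob /logistic opprK addrC. Qed.

End logistic.

Section majorization.
Context {R : realType}.
Local Open Scope convex_scope.

Lemma convex_majorization (D : set R) (f : R -> R) (a c p q : R) :
  convex_function D f -> a \in D -> q \in D ->
  a <= c -> c <= p -> p <= q -> c + p = a + q -> f c + f p <= f a + f q.
Proof.
move=> cvx aD qD ac cp pq acpq.
have [a_eq_q|a_neq_q] := eqVneq a q.
  subst q; suff [-> ->] : c = a /\ p = a by [].
  by split; apply/eqP; rewrite eq_le; apply/andP; split; lra.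
have qa_gt0 : 0 < q - a by rewrite subr_gt0 lt_neqAle a_neq_q; lra.
pose l := (q - c) / (q - a).
have l_ge0 : 0 <= l by rewrite divr_ge0 ?subr_ge0 ?ltW //; lra.
have l_le1 : l <= 1 by rewrite ler_pdivrMr // mul1r; lra.
pose t : {i01 R} := Itv01 l_ge0 l_le1.
have fc : f c <= l * f a + (1 - l) * f q.
  have -> : c = l * a + (1 - l) * q by rewrite /l; field; rewrite gt_eqF.
  exact: (cvx t a q aD qD).
have fp : f p <= l * f q + (1 - l) * f a.
  have -> : p = l * q + (1 - l) * a.
    by rewrite (_ : p = a + q - c) ?/l; [field; rewrite gt_eqF | lra].
  exact: (cvx t q a qD aD).
lra.
Qed.

End majorization.

Section logistic_powR.
Context {R : realType} {b : R} (b_ge1 : 1 <= b).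

Lemma powR_add_compl_ler [p q : R] : 2^-1 <= p -> p <= q -> q <= 1 ->
  p `^ b + (1 - p) `^ b <= q `^ b + (1 - q) `^ b.
Proof.
move=> p_ge p_le_q q_le1; rewrite addrC [q `^ b + _]addrC.
have inD x : 0 <= x -> x \in `[0, +oo[%classic by rewrite inE /= in_itv /= andbT.
apply: convex_majorization (convex_powR b_ge1) _ _ _ _ _ _; rewrite ?inD //; lra.
Qed.

Lemma logistic_powR_mix_ler [u v A B : R] : 0 <= u -> u <= v -> 0 <= B -> B <= A ->
  logistic u `^ b * A + logistic (- u) `^ b * B <=
  logistic v `^ b * A + logistic (- v) `^ b * B.
Proof.
move=> u_ge0 u_le_v B_ge0 B_le_A; rewrite !logisticN.
have p_ge := logistic_ge_half _ u_ge0; have q_le1 := logistic_le1 v.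
have p_le_q : logistic u <= logistic v by exact: ler_logistic.
have powR_le : logistic u `^ b <= logistic v `^ b.
  by apply: ge0_ler_powR; rewrite ?nnegrE ?(ltW (logistic_gt0 _)) ?(le_trans ler01 b_ge1).
have sum_le := powR_add_compl_ler p_ge p_le_q q_le1.
(* [nra] must see the powers as opaque atoms: comparing two of them by conversion
   would unfold [expR]. *)
move: powR_le sum_le; set p := logistic u; set q := logistic v.
set P := p `^ b; set Q := q `^ b; set P' := (1 - p) `^ b; set Q' := (1 - q) `^ b.
nra.
Qed.

End logistic_powR.

Section density_expectation.
Context {R : realType}.
Local Notation mu := (@lebesgue_measure R).

Lemma ge0_integral_reflect [g : R -> R] : measurable_fun setT g -> (forall x, 0 <= g x) ->
  (\int[mu]_x (g x)%:E = \int[mu]_x (g (- x))%:E)%E.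
Proof.
move=> mg g_ge0.
transitivity (\int[pushforward mu (-%R : R -> measurableTypeR R)]_x (g x)%:E)%E.
  by apply: eq_measure_integral => /= A mA _; exact/esym/lebesgue_measureN.
rewrite ge0_integral_pushforward //=; first exact/measurable_EFinP.
by move=> x _; rewrite lee_fin.
Qed.

Context {f : R -> R} (f_density : is_density f).

Lemma measurable_mul_density [h : R -> R] : measurable_fun setT h ->
  measurable_fun setT (fun x => h x * f x).
Proof. by case: f_density => mf _ mh; exact: measurable_funM. Qed.

Section unit_valued.
Context {h : R -> R} (mh : measurable_fun setT h) (h01 : forall x, 0 <= h x <= 1).

Lemma mul_density_ge0 x : 0 <= h x * f x.
Proof. by case: f_density (h01 x) => _ [f_ge0 _] /andP[h_ge0 _]; rewrite mulr_ge0. Qed.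

Lemma integral_mul_density_le1 : (\int[mu]_x (h x * f x)%:E <= 1)%E.
Proof.
case: f_density => mf [f_ge0 <-]; apply: ge0_le_integral => //.
- by move=> x _; rewrite lee_fin mul_density_ge0.
- by apply/measurable_EFinP; exact: measurable_mul_density.
- exact/measurable_EFinP.
- by move=> x _; rewrite lee_fin ler_piMl //; case/andP: (h01 x).
Qed.

Lemma expect_densE : (\int[mu]_x (h x * f x)%:E = (expect_dens f h)%:E)%E.
Proof.
rewrite /expect_dens /Rintegral fineK // ge0_fin_numE.
  exact: le_lt_trans integral_mul_density_le1 (ltry _).
by apply: integral_ge0 => x _; rewrite lee_fin mul_density_ge0.
Qed.

Lemma expect_dens_le1 : expect_dens f h <= 1.
Proof. by rewrite -lee_fin -expect_densE integral_mul_density_le1. Qed.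

Lemma integral_mul_density_symE :
  (\int[mu]_x (h x * f x + h (- x) * f (- x))%:E =
    (expect_dens f h)%:E + (expect_dens f h)%:E)%E.
Proof.
have mhf := measurable_mul_density mh.
under eq_integral do rewrite EFinD.
rewrite ge0_integralD //.
- have /= <- := ge0_integral_reflect mhf mul_density_ge0.
  by rewrite expect_densE.
- by move=> x _; rewrite lee_fin mul_density_ge0.
- exact/measurable_EFinP.
- by move=> x _; rewrite lee_fin mul_density_ge0.
- apply/measurable_EFinP.
  exact: measurableT_comp mhf (@oppr_measurable R setT).
Qed.

End unit_valued.

Lemma eq_expect_dens (h k : R -> R) : h =1 k -> expect_dens f h = expect_dens f k.
Proof. by move=> /funext ->. Qed.

Lemma expect_dens_cst [c : R] : 0 <= c -> expect_dens f (fun=> c) = c.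
Proof.
case: f_density => mf [f_ge0 f_int1] c_ge0.
rewrite /expect_dens /Rintegral; under eq_integral do rewrite EFinM.
rewrite ge0_integralZl //= ?f_int1 ?mule1 //; first exact/measurable_EFinP.
by move=> x _; rewrite lee_fin.
Qed.

Lemma expect_dens_le_sym [h k : R -> R] :
  measurable_fun setT h -> measurable_fun setT k ->
  (forall x, 0 <= h x <= 1) -> (forall x, 0 <= k x <= 1) ->
  (forall x, 0 <= x -> h x * f x + h (- x) * f (- x) <= k x * f x + k (- x) * f (- x)) ->
  expect_dens f h <= expect_dens f k.
Proof.
move=> mh mk h01 k01 hk_ge0.
have hk x : h x * f x + h (- x) * f (- x) <= k x * f x + k (- x) * f (- x).
  have [|x_lt0] := leP 0 x; first exact: hk_ge0.
  by have := hk_ge0 (- x); rewrite opprK addrC [k _ * _ + _]addrC; apply; lra.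
have measurable_sym (g : R -> R) : measurable_fun setT g ->
    measurable_fun setT (EFin \o (fun x => g x * f x + g (- x) * f (- x))).
  move=> mg; apply/measurable_EFinP/measurable_funD; first exact: measurable_mul_density.
  exact: measurableT_comp (measurable_mul_density mg) (@oppr_measurable R setT).
have : (\int[mu]_x (h x * f x + h (- x) * f (- x))%:E <=
        \int[mu]_x (k x * f x + k (- x) * f (- x))%:E)%E.
  apply: ge0_le_integral => //; try exact: measurable_sym.
  - by move=> x _; rewrite lee_fin addr_ge0 ?mul_density_ge0.
  - by move=> x _; rewrite lee_fin; exact: hk.
rewrite integral_mul_density_symE // integral_mul_density_symE //.
by rewrite -!EFinD lee_fin; lra.
Qed.

End density_expectation.

Section logistic_expectation.
Context {R : realType} {b : R} (b_ge1 : 1 <= b).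

Lemma logistic_powR_ge0_le1 (u : R) : 0 <= logistic u `^ b <= 1.
Proof.
by rewrite powR_ge0 /= (le_trans (ge1r_powR _ b_ge1)) ?logistic_gt0 ?logistic_le1.
Qed.

Lemma measurable_logistic_powR (s : R) :
  measurable_fun setT (fun x : R => logistic (s * x) `^ b).
Proof.
apply: measurableT_comp (measurable_powR _) _.
apply: measurableT_comp (continuous_measurable_fun continuous_logistic) _.
exact: measurable_funM.
Qed.

Lemma measurable_neg_prob_powR (s : R) :
  measurable_fun setT (fun x : R => neg_prob s x `^ b).
Proof.
apply: eq_measurable_fun (measurable_logistic_powR (- s)) => x _.
by rewrite neg_probE mulNr.
Qed.

Context {f : R -> R} (f_density : is_density f).

Lemma expect_pos_prob0 : expect_dens f (fun x => pos_prob 0 x `^ b) = 2^-1 `^ b.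
Proof.
rewrite -(expect_dens_cst f_density (powR_ge0 _ _)).
by apply: eq_expect_dens => x; rewrite /pos_prob mul0r -logistic0.
Qed.

Lemma expect_neg_prob0 : expect_dens f (fun x => neg_prob 0 x `^ b) = 2^-1 `^ b.
Proof.
rewrite -(expect_dens_cst f_density (powR_ge0 _ _)).
by apply: eq_expect_dens => x; rewrite neg_probE mul0r oppr0 logistic0.
Qed.

Lemma expect_pos_prob_nondecreasing : (forall x, 0 <= x -> f (- x) <= f x) ->
  {in `[0, +oo[ &, {homo (fun s => expect_dens f (fun x => pos_prob s x `^ b)) :
    s t / s <= t}}.
Proof.
move=> f_skew s t; rewrite !in_itv /= !andbT => s_ge0 _ st.
case: (f_density) => _ [f_ge0 _].
apply: (expect_dens_le_sym f_density
  (measurable_logistic_powR s) (measurable_logistic_powR t)).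
- by move=> x; exact: logistic_powR_ge0_le1.
- by move=> x; exact: logistic_powR_ge0_le1.
move=> x x_ge0; rewrite !mulrN.
by apply: logistic_powR_mix_ler => //;
  [exact: mulr_ge0 | exact: ler_wpM2r | exact: f_skew].
Qed.

Lemma expect_neg_prob_nondecreasing : (forall x, 0 <= x -> f x <= f (- x)) ->
  {in `[0, +oo[ &, {homo (fun s => expect_dens f (fun x => neg_prob s x `^ b)) :
    s t / s <= t}}.
Proof.
move=> f_skew s t; rewrite !in_itv /= !andbT => s_ge0 _ st.
case: (f_density) => _ [f_ge0 _].
apply: (expect_dens_le_sym f_density
  (measurable_neg_prob_powR s) (measurable_neg_prob_powR t)).
- by move=> x; rewrite neg_probE; exact: logistic_powR_ge0_le1.
- by move=> x; rewrite neg_probE; exact: logistic_powR_ge0_le1.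
move=> x x_ge0; rewrite !neg_probE !mulrN !opprK.
have := logistic_powR_mix_ler b_ge1 (mulr_ge0 s_ge0 x_ge0) (ler_wpM2r x_ge0 st)
  (f_ge0 x) (f_skew x x_ge0).
(* One side at a time, for the same reason as in [logistic_powR_mix_ler]. *)
by rewrite [X in X <= _]addrC [X in _ <= X]addrC.
Qed.

Lemma expect_pos_prob_gt0 : (forall x, 0 <= x -> f (- x) <= f x) ->
  forall s, 0 <= s -> 0 < expect_dens f (fun x => pos_prob s x `^ b).
Proof.
move=> f_skew s s_ge0; have half_gt0 : 0 < 2^-1 `^ b :> R by rewrite powR_gt0.
apply: lt_le_trans half_gt0 _; rewrite -expect_pos_prob0.
by apply: (expect_pos_prob_nondecreasing f_skew); rewrite ?in_itv /= ?lexx ?s_ge0.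
Qed.

Lemma expect_neg_prob_gt0 : (forall x, 0 <= x -> f x <= f (- x)) ->
  forall s, 0 <= s -> 0 < expect_dens f (fun x => neg_prob s x `^ b).
Proof.
move=> f_skew s s_ge0; have half_gt0 : 0 < 2^-1 `^ b :> R by rewrite powR_gt0.
apply: lt_le_trans half_gt0 _; rewrite -expect_neg_prob0.
by apply: (expect_neg_prob_nondecreasing f_skew); rewrite ?in_itv /= ?lexx ?s_ge0.
Qed.

End logistic_expectation.

Section objective.
Context {R : realType} {f1 f0 : R -> R} {p1 p0 b : R}.
Context (f1_density : is_density f1) (f0_density : is_density f0).
Context (p1_ge0 : 0 <= p1) (p0_ge0 : 0 <= p0) (b_ge1 : 1 <= b).

Lemma Obj_le0 s : Obj f1 f0 p1 p0 b s <= 0.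
Proof.
rewrite /Obj -[0]addr0; apply: lerD; rewrite mulr_ge0_le0 // ln_le0 //.
- apply: (expect_dens_le1 f1_density (measurable_logistic_powR s)).
  by move=> x; exact: logistic_powR_ge0_le1.
- apply: (expect_dens_le1 f0_density (measurable_neg_prob_powR s)).
  by move=> x; rewrite neg_probE; exact: logistic_powR_ge0_le1.
Qed.

Context (f1_skew : forall x, 0 <= x -> f1 (- x) <= f1 x).
Context (f0_skew : forall x, 0 <= x -> f0 x <= f0 (- x)).

Lemma Obj_nondecreasing :
  {in `[0, +oo[ &, {homo Obj f1 f0 p1 p0 b : s t / s <= t}}.
Proof.
move=> s t s_itv t_itv st; have := s_itv; rewrite in_itv /= andbT => s_ge0.
have t_ge0 := le_trans s_ge0 st.
have E1_le : ln (expect_dens f1 (fun x => pos_prob s x `^ b)) <=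
              ln (expect_dens f1 (fun x => pos_prob t x `^ b)).
  rewrite ler_ln ?posrE; first exact: expect_pos_prob_nondecreasing.
  - exact: expect_pos_prob_gt0.
  - exact: expect_pos_prob_gt0.
have E0_le : ln (expect_dens f0 (fun x => neg_prob s x `^ b)) <=
              ln (expect_dens f0 (fun x => neg_prob t x `^ b)).
  rewrite ler_ln ?posrE; first exact: expect_neg_prob_nondecreasing.
  - exact: expect_neg_prob_gt0.
  - exact: expect_neg_prob_gt0.
exact: lerD (ler_wpM2l p1_ge0 E1_le) (ler_wpM2l p0_ge0 E0_le).
Qed.

End objective.

Theorem proposition3 (R : realType) (f1 f0 : R -> R) (p1 p0 : R) :
  is_density f1 -> is_density f0 -> 0 < p1 -> 0 < p0 ->
  (forall x, 0 <= x -> f1 (- x) <= f1 x) ->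
  (forall x, 0 <= x -> f0 x <= f0 (- x)) ->
  forall b : R, 1 <= b ->
    {in `[0, +oo[ &, forall s t, s <= t -> Obj f1 f0 p1 p0 b s <= Obj f1 f0 p1 p0 b t} /\
    Obj f1 f0 p1 p0 b s @[s --> +oo] --> sup [set Obj f1 f0 p1 p0 b s | s in `[0, +oo[].
Proof.
move=> f1_density f0_density /ltW p1_ge0 /ltW p0_ge0 f1_skew f0_skew b b_ge1.
have Obj_mono := Obj_nondecreasing f1_density f0_density p1_ge0 p0_ge0 b_ge1
  f1_skew f0_skew.
split; first exact: Obj_mono.
apply: nondecreasing_itv_cvgr Obj_mono _.
by exists 0 => _ [s _ <-]; exact: Obj_le0.
Qed.
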